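(* Fix $a>0$, $b>0$, $c>0$, $\theta>0$ such that $\zeta:=\frac{b^2-a(c-\theta)}{a^2}<0$, and let $\kappa=b/a$, $s=\sqrt{-\zeta}$, $z=\frac{c-\theta}{b}$, $p=\frac{b^2}{a(c-\theta)}$. If $a\le\frac{2b^2}{c-\theta}$, the distribution assigning probability $\tfrac12$ to each of $\kappa-s$ and $\kappa+s$ is a distribution on $[0,\infty)$; if $a\ge\frac{2b^2}{c-\theta}$, then $p\in(0,1)$ and the distribution assigning probability $1-p$ to $0$ and probability $p$ to $z$ is a distribution on $[0,\infty)$. In each case the distribution has mean $\kappa$ and variance $-\zeta$, and the profile in which both players use it is a mixed Nash equilibrium of the unrestricted contest (efforts $x,y\ge0$, payoffs $P(x,y)-\theta x$ and $1-P(x,y)-\theta y$ with $P(x,y)=\tfrac12+(x-y)(c-b(x+y)+axy)$, no truncation). At $a=\frac{2b^2}{c-\theta}$ the two distributions coincide. *)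

From HB Require Import structures.
From mathcomp Require Import all_boot all_order all_algebra.
From mathcomp Require Import reals.
Set Implicit Arguments. Unset Strict Implicit. Unset Printing Implicit Defensive.
Import Order.TTheory GRing.Theory Num.Theory.
Local Open Scope ring_scope.

Section Contest.
Variable R : realType.

(* A finitely supported distribution on R: list of (probability, point) pairs. *)
Definition fdist := seq (R * R).

Definition is_dist_nonneg (d : fdist) : Prop :=
  (forall u, u \in d -> 0 <= u.1 /\ 0 <= u.2) /\ \sum_(u <- d) u.1 = 1.

Definition expect (d : fdist) (f : R -> R) : R := \sum_(u <- d) u.1 * f u.2.
Definition mean (d : fdist) : R := expect d id.
Definition variance (d : fdist) : R := expect d (fun x => (x - mean d) ^+ 2).

Definition same_dist (d1 d2 : fdist) : Prop := forall f, expect d1 f = expect d2 f.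

Definition Pcsf (a b c x y : R) : R := 1/2 + (x - y) * (c - b * (x + y) + a * x * y).

Definition payoff1 (a b c theta : R) (x y : R) := Pcsf a b c x y - theta * x.
Definition payoff2 (a b c theta : R) (x y : R) := 1 - Pcsf a b c x y - theta * y.

Definition Epayoff1 a b c theta (d1 d2 : fdist) : R :=
  \sum_(u <- d1) \sum_(v <- d2) u.1 * v.1 * payoff1 a b c theta u.2 v.2.
Definition Epayoff2 a b c theta (d1 d2 : fdist) : R :=
  \sum_(u <- d1) \sum_(v <- d2) u.1 * v.1 * payoff2 a b c theta u.2 v.2.

Definition mixed_NE a b c theta (d1 d2 : fdist) : Prop :=
  is_dist_nonneg d1 /\ is_dist_nonneg d2 /\
  (forall d, is_dist_nonneg d -> Epayoff1 a b c theta d d2 <= Epayoff1 a b c theta d1 d2) /\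
  (forall d, is_dist_nonneg d -> Epayoff2 a b c theta d1 d <= Epayoff2 a b c theta d1 d2).

Definition zeta (a b c theta : R) : R := (b ^+ 2 - a * (c - theta)) / a ^+ 2.
Definition kappa (a b : R) : R := b / a.
Definition sdev (a b c theta : R) : R := Num.sqrt (- zeta a b c theta).
Definition zpt (b c theta : R) : R := (c - theta) / b.
Definition pw (a b c theta : R) : R := b ^+ 2 / (a * (c - theta)).

Definition D_sym (a b c theta : R) : fdist :=
  [:: (1/2, kappa a b - sdev a b c theta); (1/2, kappa a b + sdev a b c theta)].
Definition D_atom (a b c theta : R) : fdist :=
  [:: (1 - pw a b c theta, 0); (pw a b c theta, zpt b c theta)].

End Contest.

From HB Require Import structures.
From mathcomp Require Import all_boot all_order all_algebra.
From mathcomp Require Import reals.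
From mathcomp Require Import ring lra.
Set Implicit Arguments. Unset Strict Implicit. Unset Printing Implicit Defensive.
Import Order.TTheory GRing.Theory Num.Theory.
Local Open Scope ring_scope.

(* Indifference principle. For fixed own effort x, the payoff P(x,y) - theta x
   is a quadratic polynomial in the opponent's effort y, so its expectation
   only depends on the mass, mean and second moment of the opponent's
   distribution. When these are 1, b/a and (c - theta)/a, the x-dependence
   cancels and every effort earns 1/2 - b theta/a; hence any distribution on
   [0,oo) with these moments, played by both players, is an equilibrium. Both
   candidate distributions have them; nonnegativity of their support points is
   exactly where the two regimes a <= 2b^2/(c - theta) and
   a >= 2b^2/(c - theta) come from. *)

Section Moments.
Variable R : realType.
Implicit Types (d : fdist R) (f : R -> R).

Definition mass d : R := \sum_(u <- d) u.1.
Definition second_moment d : R := expect d (fun y => y ^+ 2).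

Lemma expect_quadratic d f (A B C : R) :
  (forall y, f y = A + B * y + C * y ^+ 2) ->
  expect d f = A * mass d + B * mean d + C * second_moment d.
Proof.
move=> fE; rewrite /mass /second_moment /mean /expect.
elim: d => [|u d IH]; first by rewrite !big_nil; ring.
by rewrite !big_cons IH fE; ring.
Qed.

Lemma varianceE d : mass d = 1 -> variance d = second_moment d - mean d ^+ 2.
Proof.
move=> mass1; rewrite /variance.
rewrite (@expect_quadratic _ _ (mean d ^+ 2) (- (2 * mean d)) 1); last by move=> y; ring.
by rewrite mass1; ring.
Qed.

Lemma expect_mass1_const d (k : R) : mass d = 1 -> expect d (fun=> k) = k.
Proof. by rewrite /mass /expect -mulr_suml => ->; rewrite mul1r. Qed.

End Moments.

Section Payoffs.
Variables (R : realType) (a b c theta : R).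
Implicit Types (d : fdist R).

Lemma Pcsf_swap x y : Pcsf a b c y x = 1 - Pcsf a b c x y.
Proof. by rewrite /Pcsf; field. Qed.

Lemma payoff2_swap x y : payoff2 a b c theta x y = payoff1 a b c theta y x.
Proof. by rewrite /payoff1 /payoff2 (Pcsf_swap x y). Qed.

Lemma Epayoff1E d1 d2 :
  Epayoff1 a b c theta d1 d2 =
  expect d1 (fun x => expect d2 (payoff1 a b c theta x)).
Proof.
rewrite /Epayoff1 /expect; apply: eq_bigr => u _; rewrite mulr_sumr.
by apply: eq_bigr => v _; rewrite mulrA.
Qed.

Lemma Epayoff2E d1 d2 : Epayoff2 a b c theta d1 d2 = Epayoff1 a b c theta d2 d1.
Proof.
rewrite /Epayoff2 /Epayoff1 exchange_big /=.
by apply: eq_bigr => v _; apply: eq_bigr => u _; rewrite payoff2_swap (mulrC u.1).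
Qed.

End Payoffs.

Section Equalizing.
Variables (R : realType) (a b c theta : R).
Hypothesis a_neq0 : a != 0.
Implicit Types (d : fdist R).

Definition equalizing d : Prop :=
  [/\ mass d = 1, mean d = kappa a b & second_moment d = (c - theta) / a].

Lemma expect_payoff1_equalizing d x : equalizing d ->
  expect d (payoff1 a b c theta x) = 1/2 - b * theta / a.
Proof.
case=> mass1 meanE secondE.
rewrite (@expect_quadratic _ _ _ (1/2 - theta * x + x * c - b * x ^+ 2)
  (a * x ^+ 2 - c) (b - a * x)); last by move=> y; rewrite /payoff1 /Pcsf; ring.
by rewrite mass1 meanE secondE /kappa; field.
Qed.

Lemma Epayoff1_equalizing d1 d2 : mass d1 = 1 -> equalizing d2 ->
  Epayoff1 a b c theta d1 d2 = 1/2 - b * theta / a.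
Proof.
move=> mass1 eq2; rewrite Epayoff1E -(expect_mass1_const (1/2 - b * theta / a) mass1).
by apply: eq_bigr => u _; rewrite expect_payoff1_equalizing.
Qed.

Lemma equalizing_mixed_NE d : is_dist_nonneg d -> equalizing d ->
  mixed_NE a b c theta d d.
Proof.
move=> dist_d eq_d; have mass_d : mass d = 1 by case: dist_d.
do 2!split=> //; split=> d' [_ mass_d'].
  by rewrite !Epayoff1_equalizing.
by rewrite !Epayoff2E !Epayoff1_equalizing.
Qed.

Lemma equalizing_variance d : equalizing d -> variance d = - zeta a b c theta.
Proof.
case=> mass1 meanE secondE.
by rewrite varianceE // meanE secondE /kappa /zeta; field.
Qed.

End Equalizing.

Section Candidates.
Variables (R : realType) (a b c theta : R).
Hypotheses (a_gt0 : 0 < a) (b_gt0 : 0 < b) (zeta_lt0 : zeta a b c theta < 0).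

Let a_neq0 : a != 0. Proof. by rewrite gt_eqF. Qed.
Let b_neq0 : b != 0. Proof. by rewrite gt_eqF. Qed.

Lemma b2_lt_a_mul_c_sub_theta : b ^+ 2 < a * (c - theta).
Proof.
by move: zeta_lt0; rewrite /zeta pmulr_llt0 ?invr_gt0 ?exprn_gt0 // subr_lt0.
Qed.

Lemma c_sub_theta_gt0 : 0 < c - theta.
Proof.
rewrite -(pmulr_rgt0 _ a_gt0).
have := b2_lt_a_mul_c_sub_theta; have := exprn_gt0 2 b_gt0; lra.
Qed.

Let ct_neq0 : c - theta != 0. Proof. by rewrite gt_eqF ?c_sub_theta_gt0. Qed.

Lemma kappa_ge0 : 0 <= kappa a b.
Proof. by rewrite divr_ge0 ?ltW. Qed.

Lemma sdev_sqr : sdev a b c theta ^+ 2 = - zeta a b c theta.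
Proof. by rewrite sqr_sqrtr // oppr_ge0 ltW. Qed.

Lemma D_sym_equalizing : equalizing a b c theta (D_sym a b c theta).
Proof.
rewrite /equalizing /mass /mean /second_moment /expect /D_sym !big_cons !big_nil /=.
split; [by field | by field |].
have -> : 1 / 2 * (kappa a b - sdev a b c theta) ^+ 2 +
          (1 / 2 * (kappa a b + sdev a b c theta) ^+ 2 + 0)
          = kappa a b ^+ 2 + sdev a b c theta ^+ 2 by field.
by rewrite sdev_sqr /kappa /zeta; field.
Qed.

Lemma sqr_kappa_sub_var :
  kappa a b ^+ 2 - - zeta a b c theta = (2 * b ^+ 2 - a * (c - theta)) / a ^+ 2.
Proof. by rewrite /kappa /zeta; field. Qed.

Lemma sdev_le_kappa : a * (c - theta) <= 2 * b ^+ 2 ->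
  sdev a b c theta <= kappa a b.
Proof.
move=> small_a; rewrite -(ger0_norm kappa_ge0) -sqrtr_sqr ler_sqrt ?sqr_ge0 //.
by rewrite -subr_ge0 sqr_kappa_sub_var divr_ge0 ?subr_ge0 ?sqr_ge0.
Qed.

Lemma D_sym_nonneg : a * (c - theta) <= 2 * b ^+ 2 ->
  is_dist_nonneg (D_sym a b c theta).
Proof.
move=> small_a; split; last by case: D_sym_equalizing.
move=> u; rewrite !inE => /orP[] /eqP -> /=; split; try lra.
  by rewrite subr_ge0 sdev_le_kappa.
by rewrite addr_ge0 ?kappa_ge0 ?sqrtr_ge0.
Qed.

Lemma pw_gt0 : 0 < pw a b c theta.
Proof. by rewrite divr_gt0 ?exprn_gt0 ?mulr_gt0 ?c_sub_theta_gt0. Qed.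

Lemma pw_lt1 : pw a b c theta < 1.
Proof. by rewrite ltr_pdivrMr ?mulr_gt0 ?c_sub_theta_gt0 // mul1r b2_lt_a_mul_c_sub_theta. Qed.

Lemma D_atom_equalizing : equalizing a b c theta (D_atom a b c theta).
Proof.
rewrite /equalizing /mass /mean /second_moment /expect /D_atom.
rewrite !big_cons !big_nil /= /pw /zpt /kappa.
by split; field; rewrite ?a_neq0 ?b_neq0 ?ct_neq0.
Qed.

Lemma D_atom_nonneg : is_dist_nonneg (D_atom a b c theta).
Proof.
split; last by case: D_atom_equalizing.
have := pw_gt0; have := pw_lt1.
move=> p_lt1 p_gt0 u; rewrite !inE => /orP[] /eqP -> /=; split; try lra.
by rewrite divr_ge0 ?ltW ?c_sub_theta_gt0.
Qed.

(* At the threshold kappa = sdev, so D_sym is (1/2, 0), (1/2, 2 kappa), which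
   is D_atom since then pw = 1/2 and zpt = 2 kappa. *)
Lemma D_sym_D_atom_threshold : a * (c - theta) = 2 * b ^+ 2 ->
  D_sym a b c theta = D_atom a b c theta.
Proof.
move=> threshold.
have sdevE : sdev a b c theta = kappa a b.
  have /eqP : kappa a b ^+ 2 - - zeta a b c theta = 0.
    by rewrite sqr_kappa_sub_var threshold subrr mul0r.
  by rewrite subr_eq0 /sdev => /eqP <-; rewrite sqrtr_sqr ger0_norm ?kappa_ge0.
have ctE : c - theta = 2 * b ^+ 2 / a by rewrite -threshold; field.
rewrite /D_sym /D_atom sdevE subrr /pw /zpt threshold ctE /kappa.
by congr [:: (_, _); (_, _)]; field; rewrite ?a_neq0 ?b_neq0.
Qed.

End Candidates.

Theorem proposition2 (R : realType) (a b c theta : R) :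
  0 < a -> 0 < b -> 0 < c -> 0 < theta -> zeta a b c theta < 0 ->
  (a <= 2 * b ^+ 2 / (c - theta) ->
     is_dist_nonneg (D_sym a b c theta) /\
     mean (D_sym a b c theta) = kappa a b /\
     variance (D_sym a b c theta) = - zeta a b c theta /\
     mixed_NE a b c theta (D_sym a b c theta) (D_sym a b c theta)) /\
  (2 * b ^+ 2 / (c - theta) <= a ->
     0 < pw a b c theta < 1 /\
     is_dist_nonneg (D_atom a b c theta) /\
     mean (D_atom a b c theta) = kappa a b /\
     variance (D_atom a b c theta) = - zeta a b c theta /\
     mixed_NE a b c theta (D_atom a b c theta) (D_atom a b c theta)) /\
  (a = 2 * b ^+ 2 / (c - theta) ->
     same_dist (D_sym a b c theta) (D_atom a b c theta)).
Proof.
move=> a_gt0 b_gt0 _ _ zeta_lt0.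
have a_neq0 : a != 0 by rewrite gt_eqF.
have ct_gt0 : 0 < c - theta := c_sub_theta_gt0 a_gt0 b_gt0 zeta_lt0.
have sym_eq := D_sym_equalizing a_gt0 zeta_lt0.
have atom_eq := D_atom_equalizing a_gt0 b_gt0 zeta_lt0.
split; [|split].
- rewrite ler_pdivlMr // => small_a.
  have sym_nonneg := D_sym_nonneg a_gt0 b_gt0 zeta_lt0 small_a.
  have [_ -> _] := sym_eq; rewrite (equalizing_variance a_neq0 sym_eq).
  by split; [|split; [|split]]; last exact: equalizing_mixed_NE.
- move=> _; split.
    by rewrite (pw_gt0 a_gt0 b_gt0 zeta_lt0) (pw_lt1 a_gt0 b_gt0 zeta_lt0).
  have atom_nonneg := D_atom_nonneg a_gt0 b_gt0 zeta_lt0.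
  have [_ -> _] := atom_eq; rewrite (equalizing_variance a_neq0 atom_eq).
  by split; [|split; [|split]]; last exact: equalizing_mixed_NE.
- move=> threshold f; congr expect.
  apply: (D_sym_D_atom_threshold a_gt0 b_gt0).
  by rewrite threshold divfK // gt_eqF.
Qed.
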